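(* Let $X$ and $Y$ be $\mathbb{N}$-valued random variables with $P\{X=0\}\ne1$, $P\{Y=0\}\neq 1$ and $\mathbb{E}[X^2+Y^2]<+\infty$. Let $f_t$ be the solution of the kinetic equation with initial probability density $f_0$ on $\mathbb{N}$ with mean $m_0$ and $\mathrm{Var}(f_0)<+\infty$. Set $\alpha_1=\mathbb{E}[X]+\mathbb{E}[Y]-1$, $\alpha_2=\mathbb{E}[X]^2+\mathbb{E}[Y]^2-1$, $\beta=\mathrm{Var}(X)+\mathrm{Var}(Y)$, $\gamma=\mathbb{E}[X]\mathbb{E}[Y]$. Then for every $t>0$ $$\begin{aligned}\mathrm{Var}(f_t)={}&M_2(f_0)e^{\alpha_2t}-m_0^2e^{2\alpha_1t}+\beta m_0\Big[\frac{e^{\alpha_1t}-e^{\alpha_2t}}{\alpha_1-\alpha_2}\mathbb{I}\{\alpha_1\ne\alpha_2\}+te^{\alpha_2t}\mathbb{I}\{\alpha_1=\alpha_2\}\Big]\\&+2\gamma m_0^2\Big[\frac{e^{2\alpha_1t}-e^{\alpha_2t}}{2\alpha_1-\alpha_2}\mathbb{I}\{2\alpha_1\ne\alpha_2\}+te^{\alpha_2t}\mathbb{I}\{2\alpha_1=\alpha_2\}\Big].\end{aligned}$$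
   Context: $M_2(f)=\sum_v v^2f(v)$, $\mathrm{Var}(f)=M_2(f)-M_1(f)^2$, $\mathbb{I}$ is the indicator function. The kinetic equation is $\partial_t\hat f_t(z)=\hat f_t(\hat p_X(z))\hat f_t(\hat p_Y(z))-\hat f_t(z)$, $z\in[0,1]$, $t>0$, for $\hat f_t(z)=\sum_vz^vf_t(v)$, with $\hat p_X(z)=\mathbb{E}[z^X]$, $\hat p_Y(z)=\mathbb{E}[z^Y]$; it has a unique global solution for each initial probability density (equivalently $\partial_tf_t=Q^+(f_t,f_t)-f_t$ with $Q^+(f,g)(v)=P\{\sum_{i=1}^{V_1}Y_i+\sum_{i=1}^{V_2}X_i=v\}$, $V_1\sim f$, $V_2\sim g$, $X_i$ i.i.d. $\sim X$, $Y_i$ i.i.d. $\sim Y$, all independent). *)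

From Stdlib Require Import Reals.
From Coquelicot Require Import Coquelicot.
Open Scope R_scope.

Definition is_pdens (f : nat -> R) : Prop :=
  (forall v, 0 <= f v) /\ is_series f 1.

Definition gf (f : nat -> R) (z : R) : R := Series (fun v => f v * z ^ v).

Definition M1 (f : nat -> R) : R := Series (fun v => INR v * f v).
Definition M2 (f : nat -> R) : R := Series (fun v => (INR v) ^ 2 * f v).
Definition Varf (f : nat -> R) : R := M2 f - (M1 f) ^ 2.

Definition finite_M2 (f : nat -> R) : Prop := ex_series (fun v => (INR v) ^ 2 * f v).

(* (f_t)_{t>=0} is the solution of the kinetic equation
     d/dt \hat f_t(z) = \hat f_t(\hat p_X(z)) \hat f_t(\hat p_Y(z)) - \hat f_t(z),
   z in [0,1], t > 0, with initial datum f0: each f_t is a probability density,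
   f_0 = f0, t |-> \hat f_t(z) is right-continuous at 0 and differentiable on
   (0,+oo) with the above derivative. *)
Definition kinetic_solution (pX pY f0 : nat -> R) (f : R -> nat -> R) : Prop :=
  (forall v, f 0 v = f0 v) /\
  (forall t, 0 <= t -> is_pdens (f t)) /\
  (forall z, 0 <= z <= 1 ->
     filterlim (fun t => gf (f t) z) (at_right 0) (locally (gf f0 z)) /\
     (forall t, 0 < t ->
        is_derive (fun s => gf (f s) z) t
          (gf (f t) (gf pX z) * gf (f t) (gf pY z) - gf (f t) z))).

Definition phi (a b t : R) : R :=
  if Req_EM_T a b then t * exp (b * t) else (exp (a * t) - exp (b * t)) / (a - b).

From Stdlib Require Import Reals Lra Lia Psatz.
From Coquelicot Require Import Coquelicot.
Open Scope R_scope.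

(* The moments of [f t] are not known to be finite a priori, so they are read off the
   generating function at [w = 1].  Let [m], [s] solve the moment equations
   [m' = alpha1 m] and [s' = alpha2 s + (E[X(X-1)] + E[Y(Y-1)]) m + 2 gamma m^2] ([s] is the
   second factorial moment), and let [P t w = 1 - m t (1 - w) + s t / 2 (1 - w)^2].
   Since [gf pX w = 1 - E[X] (1 - w) + O((1 - w)^2)], with a remainder controlled by
   [E[X^2]], the polynomial [P] solves the kinetic equation up to [o((1 - w)^2)] uniformly
   for [t] in [[0, T]]; and the nonlinearity is Lipschitz for a norm weighted by
   [(1 - w)^2], because [gf pX] moves [1 - w] by a factor at most [E[X]].  Gronwall's
   lemma then gives [gf (f T) w = P T w + o((1 - w)^2)], and for a density on [N] such
   an expansion forces [E[V^2] < oo] with [M1 = m T] and [M2 = s T + m T]. *)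

Lemma ex_series_le_nonneg (a b : nat -> R) :
  (forall n, 0 <= a n <= b n) -> ex_series b -> ex_series a.
Proof.
  intros Hab Hb. apply (ex_series_le a b); auto.
  intro n. change (norm (a n)) with (Rabs (a n)).
  rewrite Rabs_pos_eq; apply Hab.
Qed.

Lemma Series_nonneg (a : nat -> R) : (forall n, 0 <= a n) -> ex_series a -> 0 <= Series a.
Proof.
  intros Ha Hex.
  replace 0 with (Series (fun n => 0 * a n)) by (rewrite Series_scal_l; ring).
  apply Series_le; auto. intro n. specialize (Ha n). lra.
Qed.

Lemma sum_f_R0_le_Series (a : nat -> R) N :
  (forall n, 0 <= a n) -> ex_series a -> sum_f_R0 a N <= Series a.
Proof.
  intros Ha Hex.
  rewrite (Series_incr_n a (S N)); [|lia|auto]. simpl.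
  assert (0 <= Series (fun k => a (S (N + k)))).
  { apply Series_nonneg; [intro; apply Ha|]. exact (proj1 (ex_series_incr_n a (S N)) Hex). }
  lra.
Qed.

Lemma ex_series_bounded_sums (a : nat -> R) B :
  (forall n, 0 <= a n) -> (forall N, sum_f_R0 a N <= B) ->
  ex_series a /\ Series a <= B.
Proof.
  intros Ha HB.
  destruct (growing_cv (sum_f_R0 a)) as [l Hl].
  { intro n. simpl. specialize (Ha (S n)). lra. }
  { exists B. intros x [n ->]. apply HB. }
  assert (Hs : is_series a l) by (apply is_series_Reals; exact Hl).
  split; [exists l; exact Hs|].
  rewrite (is_series_unique a l Hs).
  apply (is_lim_seq_le (sum_n a) (fun _ => B) l B); [|exact Hs|apply is_lim_seq_const].
  intro n. rewrite sum_n_Reals. apply HB.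
Qed.

Lemma Series_sub_partial_sum_small (a : nat -> R) eps :
  ex_series a -> 0 < eps -> exists N, Rabs (Series a - sum_f_R0 a N) <= eps.
Proof.
  intros [l Hl] Heps.
  assert (Hlim : is_lim_seq (sum_n a) l) by exact Hl.
  apply is_lim_seq_spec in Hlim. destruct (Hlim (mkposreal eps Heps)) as [N HN].
  exists N. specialize (HN N (le_n _)). simpl in HN.
  rewrite sum_n_Reals in HN. rewrite (is_series_unique a l Hl), Rabs_minus_sym. lra.
Qed.

Lemma le_of_le_plus_small (a b c eta : R) : 0 <= c -> 0 < eta ->
  (forall x, 0 < x <= eta -> a <= b + x * c) -> a <= b.
Proof.
  intros Hc Heta H. destruct (Rle_dec a b) as [|Hn]; auto.
  exfalso. set (x := Rmin eta ((a - b) / (2 * (c + 1)))).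
  assert (Hx0 : 0 < x) by (apply Rmin_glb_lt; [lra|apply Rdiv_lt_0_compat; lra]).
  assert (Hx1 : x <= eta) by apply Rmin_l.
  assert (Hx2 : x * (2 * (c + 1)) <= a - b).
  { replace (a - b) with ((a - b) / (2 * (c + 1)) * (2 * (c + 1))) by (field; lra).
    apply Rmult_le_compat_r; [lra|apply Rmin_r]. }
  specialize (H x (conj Hx0 Hx1)). nra.
Qed.

Fixpoint geom_sum (z : R) (k : nat) : R :=
  match k with O => 0 | S k => geom_sum z k + z ^ k end.
Fixpoint geom_sum2 (z : R) (k : nat) : R :=
  match k with O => 0 | S k => geom_sum2 z k + geom_sum z k end.

Lemma pow_unit_interval z k : 0 <= z <= 1 -> 0 <= z ^ k <= 1.
Proof. intros Hz. induction k; simpl; nra. Qed.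

Lemma one_sub_pow z k : 1 - z ^ k = (1 - z) * geom_sum z k.
Proof. induction k; simpl; nra. Qed.

Lemma INR_sub_geom_sum z k : INR k - geom_sum z k = (1 - z) * geom_sum2 z k.
Proof.
  induction k; simpl geom_sum; simpl geom_sum2; [simpl; ring|].
  rewrite S_INR, Rmult_plus_distr_l, <- IHk, <- one_sub_pow. ring.
Qed.

Lemma geom_sum_bounds z k : 0 <= z <= 1 -> 0 <= geom_sum z k <= INR k.
Proof.
  intros Hz. induction k; simpl geom_sum; [simpl; lra|].
  rewrite S_INR. pose proof (pow_unit_interval z k Hz). lra.
Qed.

Lemma geom_sum2_bounds z k : 0 <= z <= 1 ->
  0 <= geom_sum2 z k /\ 2 * geom_sum2 z k <= INR k * (INR k - 1).
Proof.
  intros Hz. induction k; simpl geom_sum2; [simpl; lra|].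
  rewrite S_INR. pose proof (geom_sum_bounds z k Hz). pose proof (pos_INR k). nra.
Qed.

Lemma geom_sum2_defect z k : 0 <= z <= 1 ->
  INR k * (INR k - 1) / 2 - geom_sum2 z k <= INR k ^ 3 * (1 - z).
Proof.
  intros Hz. induction k; simpl geom_sum2; [simpl; lra|].
  rewrite S_INR. pose proof (INR_sub_geom_sum z k). pose proof (geom_sum2_bounds z k Hz).
  pose proof (pos_INR k).
  assert ((1 - z) * geom_sum2 z k <= (1 - z) * (INR k * INR k)) by nra.
  nra.
Qed.

(** * Generating functions near [z = 1] *)

Definition half_fact2 (p : nat -> R) : R := (M2 p - M1 p) / 2.

Definition gf_rem2 (p : nat -> R) (z : R) : R := Series (fun k => p k * geom_sum2 z k).

Section Density.

Variable p : nat -> R.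
Hypothesis Hp : is_pdens p.

Lemma pdens_nonneg n : 0 <= p n.
Proof. apply Hp. Qed.

Lemma pdens_ex_series : ex_series p.
Proof. exists 1; apply Hp. Qed.

Lemma pdens_Series : Series p = 1.
Proof. apply is_series_unique, Hp. Qed.

Lemma ex_series_gf z : 0 <= z <= 1 -> ex_series (fun v => p v * z ^ v).
Proof.
  intros Hz. apply (ex_series_le_nonneg _ p); [|apply pdens_ex_series].
  intro n. pose proof (pow_unit_interval z n Hz). pose proof (pdens_nonneg n). nra.
Qed.

Lemma gf_unit_interval z : 0 <= z <= 1 -> 0 <= gf p z <= 1.
Proof.
  intros Hz. unfold gf. split.
  - apply Series_nonneg; [|apply ex_series_gf; auto].
    intro n. pose proof (pow_unit_interval z n Hz). pose proof (pdens_nonneg n). nra.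
  - rewrite <- pdens_Series. apply Series_le; [|apply pdens_ex_series].
    intro n. pose proof (pow_unit_interval z n Hz). pose proof (pdens_nonneg n). nra.
Qed.

Lemma one_sub_gf z : 0 <= z < 1 ->
  ex_series (fun k => p k * geom_sum z k) /\
  1 - gf p z = (1 - z) * Series (fun k => p k * geom_sum z k).
Proof.
  intros Hz.
  assert (Hex : ex_series (fun k => p k * geom_sum z k)).
  { apply (ex_series_le_nonneg _ (fun k => p k * / (1 - z)));
      [|apply ex_series_scal_r, pdens_ex_series].
    intro n. pose proof (geom_sum_bounds z n ltac:(lra)). pose proof (pdens_nonneg n).
    pose proof (one_sub_pow z n). pose proof (pow_unit_interval z n ltac:(lra)).
    split; [nra|]. apply Rmult_le_compat_l; auto.
    apply (Rmult_le_reg_l (1 - z)); [lra|]. rewrite Rinv_r by lra. lra. }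
  split; auto.
  unfold gf. rewrite <- pdens_Series at 1.
  rewrite <- Series_minus, <- Series_scal_l; [|apply pdens_ex_series|apply ex_series_gf; lra].
  apply Series_ext. intro n.
  replace (p n - p n * z ^ n) with (p n * (1 - z ^ n)) by ring. rewrite one_sub_pow. ring.
Qed.

Hypothesis Hm : finite_M2 p.

Lemma ex_series_M1 : ex_series (fun v => INR v * p v).
Proof.
  apply (ex_series_le_nonneg _ (fun v => INR v ^ 2 * p v)); [|exact Hm].
  intro n. pose proof (pdens_nonneg n). split; [pose proof (pos_INR n); nra|].
  destruct n; [simpl; lra|]. rewrite S_INR. pose proof (pos_INR n). nra.
Qed.

Lemma M1_nonneg : 0 <= M1 p.
Proof.
  apply Series_nonneg; [|exact ex_series_M1].
  intro n. pose proof (pdens_nonneg n). pose proof (pos_INR n). nra.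
Qed.

Lemma ex_series_geom_sum z : 0 <= z <= 1 -> ex_series (fun k => p k * geom_sum z k).
Proof.
  intros Hz. apply (ex_series_le_nonneg _ (fun v => INR v * p v)); [|exact ex_series_M1].
  intro n. pose proof (geom_sum_bounds z n Hz). pose proof (pdens_nonneg n). nra.
Qed.

Lemma ex_series_geom_sum2 z : 0 <= z <= 1 -> ex_series (fun k => p k * geom_sum2 z k).
Proof.
  intros Hz. apply (ex_series_le_nonneg _ (fun v => INR v ^ 2 * p v)); [|exact Hm].
  intro n. pose proof (geom_sum2_bounds z n Hz). pose proof (pdens_nonneg n).
  pose proof (pos_INR n). nra.
Qed.

Lemma Series_geom_sum z : 0 <= z <= 1 ->
  Series (fun k => p k * geom_sum z k) = M1 p - (1 - z) * gf_rem2 p z.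
Proof.
  intros Hz. unfold M1, gf_rem2.
  rewrite <- Series_scal_l, <- Series_minus;
    [|exact ex_series_M1|exact (ex_series_scal_l (1 - z) _ (ex_series_geom_sum2 z Hz))].
  apply Series_ext. intro n.
  replace (p n * geom_sum z n) with (INR n * p n - p n * (INR n - geom_sum z n)) by ring.
  rewrite INR_sub_geom_sum. ring.
Qed.

Lemma gf_expansion z : 0 <= z <= 1 ->
  gf p z = 1 - (1 - z) * (M1 p - (1 - z) * gf_rem2 p z) /\
  0 <= M1 p - (1 - z) * gf_rem2 p z.
Proof.
  intros Hz. rewrite <- Series_geom_sum by auto. split.
  - unfold gf. rewrite <- pdens_Series at 1.
    rewrite <- Series_scal_l, <- Series_minus;
      [|apply pdens_ex_series|exact (ex_series_scal_l (1 - z) _ (ex_series_geom_sum z Hz))].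
    apply Series_ext. intro n.
    replace (p n * z ^ n) with (p n - p n * (1 - z ^ n)) by ring. rewrite one_sub_pow. ring.
  - apply Series_nonneg; [|apply ex_series_geom_sum; auto].
    intro n. pose proof (geom_sum_bounds z n Hz). pose proof (pdens_nonneg n). nra.
Qed.

Lemma is_series_half_fact2 : is_series (fun k => p k * (INR k * (INR k - 1) / 2)) (half_fact2 p).
Proof.
  assert (E : ex_series (fun k => p k * (INR k * (INR k - 1) / 2))).
  { apply (ex_series_le_nonneg _ (fun k => INR k ^ 2 * p k * / 2)); [|apply ex_series_scal_r, Hm].
    intro n. pose proof (pos_INR n). pose proof (pdens_nonneg n). split; [|nra].
    destruct n; [simpl; lra|]. rewrite S_INR in *. pose proof (pos_INR n). nra. }
  replace (half_fact2 p) with (Series (fun k => p k * (INR k * (INR k - 1) / 2))).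
  { apply Series_correct, E. }
  unfold half_fact2, M1, M2. rewrite <- Series_minus; [|exact Hm|exact ex_series_M1].
  unfold Rdiv. rewrite <- Series_scal_r. apply Series_ext; intro; field.
Qed.

Lemma gf_rem2_bounds z : 0 <= z <= 1 -> 0 <= gf_rem2 p z <= half_fact2 p.
Proof.
  intros Hz. split.
  - apply Series_nonneg; [|apply ex_series_geom_sum2; auto].
    intro n. pose proof (geom_sum2_bounds z n Hz). pose proof (pdens_nonneg n). nra.
  - rewrite <- (is_series_unique _ _ is_series_half_fact2). apply Series_le.
    + intro n. pose proof (geom_sum2_bounds z n Hz). pose proof (pdens_nonneg n). nra.
    + eexists; apply is_series_half_fact2.
Qed.

Lemma one_sub_gf_bounds z : 0 <= z <= 1 -> 0 <= 1 - gf p z <= M1 p * (1 - z).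
Proof.
  intros Hz. destruct (gf_expansion z Hz) as [E Hnn].
  pose proof (gf_rem2_bounds z Hz). rewrite E.
  replace (1 - (1 - (1 - z) * (M1 p - (1 - z) * gf_rem2 p z)))
    with ((1 - z) * (M1 p - (1 - z) * gf_rem2 p z)) by ring.
  split; [apply Rmult_le_pos; lra|].
  rewrite (Rmult_comm (M1 p)). apply Rmult_le_compat_l; nra.
Qed.

(* Cut the series at a rank [N] where its tail is below [eps]; the head converges at rate
   [1 - z] by [geom_sum2_defect]. *)
Lemma half_fact2_sub_gf_rem2 eps : 0 < eps -> exists K, 0 <= K /\
  forall z, 0 <= z <= 1 -> half_fact2 p - gf_rem2 p z <= eps + K * (1 - z).
Proof.
  intros Heps.
  set (q := fun k => p k * (INR k * (INR k - 1) / 2)).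
  assert (Hq : is_series q (half_fact2 p)) by exact is_series_half_fact2.
  assert (Eq : ex_series q) by (eexists; exact Hq).
  destruct (Series_sub_partial_sum_small q eps Eq Heps) as [N HN].
  rewrite (is_series_unique _ _ Hq) in HN.
  set (K := sum_f_R0 (fun k => p k * INR k ^ 3) N).
  exists K. split.
  { apply cond_pos_sum. intro n. pose proof (pdens_nonneg n).
    pose proof (pow_le _ 3 (pos_INR n)). nra. }
  intros z Hz.
  set (d := fun k => q k - p k * geom_sum2 z k).
  assert (Ed : ex_series d) by (apply (ex_series_minus q); auto using ex_series_geom_sum2).
  assert (Hd : half_fact2 p - gf_rem2 p z = Series d).
  { rewrite <- (is_series_unique _ _ Hq). unfold gf_rem2.
    rewrite <- Series_minus; auto using ex_series_geom_sum2. }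
  assert (Head : sum_f_R0 d N <= K * (1 - z)).
  { unfold K. rewrite Rmult_comm, scal_sum. apply sum_Rle. intros n _. unfold d, q.
    pose proof (geom_sum2_defect z n Hz). pose proof (pdens_nonneg n). nra. }
  assert (Tail : Series (fun k => d (S N + k)%nat) <= Series (fun k => q (S N + k)%nat)).
  { apply Series_le; [|exact (proj1 (ex_series_incr_n q (S N)) Eq)].
    intro n. unfold d, q. pose proof (geom_sum2_bounds z (S N + n) Hz).
    pose proof (pdens_nonneg (S N + n)). nra. }
  assert (Hq_split : Series q = sum_f_R0 q N + Series (fun k => q (S N + k)%nat)).
  { rewrite (Series_incr_n q (S N)) by (auto; lia). reflexivity. }
  rewrite Hd, (Series_incr_n d (S N)) by (auto; lia). simpl Init.Nat.pred.
  rewrite (is_series_unique _ _ Hq) in Hq_split.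
  apply Rabs_le_between in HN. lra.
Qed.

End Density.

(** * Moments from an expansion of the generating function *)

(* A monotone-convergence principle with an explicit rate: the partial sums of [q] are
   approached by those of [r x] up to [x * sum e], while [Series (r x) -> l]. *)
Lemma is_series_of_approximants (q e : nat -> R) (r : R -> nat -> R) (l : R) :
  (forall x k, 0 < x <= 1 -> 0 <= r x k <= q k) ->
  (forall x k, 0 < x <= 1 -> q k - r x k <= x * e k) ->
  (forall k, 0 <= e k) ->
  (forall x, 0 < x <= 1 -> ex_series (r x)) ->
  (forall eps, 0 < eps -> exists eta, 0 < eta /\
     forall x, 0 < x <= eta -> x <= 1 -> Rabs (Series (r x) - l) <= eps) ->
  is_series q l.
Proof.
  intros Hr Hqr He Ex Hl.
  assert (Hq : forall k, 0 <= q k) by (intro k; pose proof (Hr 1 k ltac:(lra)); lra).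
  assert (Hsum : forall N, sum_f_R0 q N <= l).
  { intro N. apply (le_of_le_plus_small _ _ 1 1); [lra|lra|]. intros eps Heps.
    destruct (Hl eps (proj1 Heps)) as [eta [Heta Hx]].
    assert (HE : 0 <= sum_f_R0 e N) by (apply cond_pos_sum, He).
    apply (le_of_le_plus_small _ _ (sum_f_R0 e N) (Rmin eta 1)); auto.
    { apply Rmin_glb_lt; lra. }
    intros x [Hx0 Hx1]. pose proof (Rmin_l eta 1). pose proof (Rmin_r eta 1).
    specialize (Hx x ltac:(lra) ltac:(lra)). apply Rabs_le_between in Hx.
    assert (sum_f_R0 q N <= sum_f_R0 (r x) N + x * sum_f_R0 e N).
    { rewrite scal_sum, <- sum_plus. apply sum_Rle. intros n _.
      pose proof (Hqr x n ltac:(lra)). lra. }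
    assert (sum_f_R0 (r x) N <= Series (r x)).
    { apply sum_f_R0_le_Series; [|apply Ex; lra]. intro n. apply (Hr x n). lra. }
    lra. }
  destruct (ex_series_bounded_sums q l Hq Hsum) as [Eq Hle].
  assert (Hge : l <= Series q).
  { apply (le_of_le_plus_small _ _ 1 1); [lra|lra|]. intros eps Heps.
    destruct (Hl eps (proj1 Heps)) as [eta [Heta Hx]].
    assert (Hx0 : 0 < Rmin eta 1) by (apply Rmin_glb_lt; lra).
    pose proof (Rmin_l eta 1). pose proof (Rmin_r eta 1).
    specialize (Hx (Rmin eta 1) ltac:(lra) ltac:(lra)). apply Rabs_le_between in Hx.
    assert (Series (r (Rmin eta 1)) <= Series q)
      by (apply Series_le; auto; intro n; apply Hr; lra).
    lra. }
  replace l with (Series q) by lra. apply Series_correct, Eq.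
Qed.

Definition gf_expands (p : nat -> R) (m s : R) : Prop :=
  forall eps, 0 < eps -> exists eta, 0 < eta /\ forall x, 0 < x <= eta -> x <= 1 ->
    Rabs (gf p (1 - x) - (1 - m * x + s / 2 * x ^ 2)) <= eps * x ^ 2.

Section MomentsOfExpansion.

Variables (p : nat -> R) (m s : R).
Hypotheses (Hp : is_pdens p) (Hexp : gf_expands p m s).

Let D x := Series (fun k => p k * geom_sum (1 - x) k).

Lemma one_sub_gf_shift x : 0 < x <= 1 ->
  ex_series (fun k => p k * geom_sum (1 - x) k) /\ 1 - gf p (1 - x) = x * D x.
Proof.
  intros Hx. destruct (one_sub_gf p Hp (1 - x) ltac:(lra)) as [Ex E].
  split; auto. rewrite E. unfold D. f_equal. ring.
Qed.

Lemma Series_geom_sum_shift_near_M1 : exists eta, 0 < eta /\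
  forall x, 0 < x <= eta -> x <= 1 -> Rabs (D x - m) <= x * (Rabs s / 2 + 1).
Proof.
  destruct (Hexp 1 ltac:(lra)) as [eta [Heta H1]]. exists eta. split; auto.
  intros x Hx Hx1. specialize (H1 x Hx Hx1). destruct (one_sub_gf_shift x ltac:(lra)) as [_ E].
  assert (HD : x * (D x - m) = - (gf p (1 - x) - (1 - m * x + s / 2 * x ^ 2)) - s / 2 * x ^ 2)
    by lra.
  assert (Hs : Rabs (s / 2 * x ^ 2) <= Rabs s / 2 * x ^ 2).
  { rewrite Rabs_mult, (Rabs_pos_eq (x ^ 2)) by apply pow2_ge_0.
    unfold Rdiv. rewrite Rabs_mult, (Rabs_pos_eq (/ 2)) by lra. lra. }
  apply Rabs_le_between in Hs. apply Rabs_le_between in H1. apply Rabs_le_between.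
  split; apply (Rmult_le_reg_l x); lra.
Qed.

Lemma is_series_M1_of_expansion : is_series (fun k => INR k * p k) m.
Proof.
  apply (is_series_of_approximants _ (fun k => INR k ^ 2 * p k)
           (fun x k => p k * geom_sum (1 - x) k)).
  - intros x k Hx. pose proof (geom_sum_bounds (1 - x) k ltac:(lra)).
    pose proof (pdens_nonneg p Hp k). nra.
  - intros x k Hx. pose proof (INR_sub_geom_sum (1 - x) k).
    pose proof (geom_sum2_bounds (1 - x) k ltac:(lra)). pose proof (pdens_nonneg p Hp k).
    pose proof (pos_INR k). replace (1 - (1 - x)) with x in * by ring.
    assert (x * geom_sum2 (1 - x) k <= x * INR k ^ 2) by (apply Rmult_le_compat_l; nra).
    nra.
  - intro k. pose proof (pdens_nonneg p Hp k). pose proof (pow2_ge_0 (INR k)). nra.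
  - intros x Hx. apply (one_sub_gf_shift x Hx).
  - intros eps Heps. set (c := Rabs s / 2 + 1).
    assert (Hc : 0 < c) by (unfold c; pose proof (Rabs_pos s); lra).
    destruct Series_geom_sum_shift_near_M1 as [eta [Heta HD]].
    exists (Rmin eta (eps / c)). split; [apply Rmin_glb_lt; [lra|apply Rdiv_lt_0_compat; lra]|].
    intros x Hx Hx1. pose proof (Rmin_l eta (eps / c)). pose proof (Rmin_r eta (eps / c)).
    apply Rle_trans with (1 := HD x ltac:(lra) Hx1). fold c.
    replace eps with (eps / c * c) by (field; lra). apply Rmult_le_compat_r; lra.
Qed.

Lemma is_series_half_fact2_of_expansion :
  is_series (fun k => p k * (INR k * (INR k - 1) / 2)) (s / 2).
Proof.
  assert (HM1 := is_series_M1_of_expansion).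
  assert (EM1 : ex_series (fun k => INR k * p k)) by (eexists; exact HM1).
  assert (Ex : forall x, 0 < x <= 1 -> ex_series (fun k => p k * geom_sum2 (1 - x) k)).
  { intros x Hx. apply (ex_series_le_nonneg _ (fun k => INR k * p k * / x));
      [|apply ex_series_scal_r, EM1].
    intro n. pose proof (INR_sub_geom_sum (1 - x) n).
    pose proof (geom_sum2_bounds (1 - x) n ltac:(lra)).
    pose proof (geom_sum_bounds (1 - x) n ltac:(lra)). pose proof (pdens_nonneg p Hp n).
    replace (1 - (1 - x)) with x in * by ring. split; [nra|].
    assert (geom_sum2 (1 - x) n <= INR n * / x).
    { apply (Rmult_le_reg_l x); [lra|].
      replace (x * (INR n * / x)) with (INR n) by (field; lra). lra. }
    nra. }
  assert (HDC : forall x, 0 < x <= 1 ->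
    D x = m - x * Series (fun k => p k * geom_sum2 (1 - x) k)).
  { intros x Hx. rewrite <- (is_series_unique _ _ HM1), <- Series_scal_l, <- Series_minus;
      [|exact EM1|exact (ex_series_scal_l x _ (Ex x Hx))].
    apply Series_ext. intro n. pose proof (INR_sub_geom_sum (1 - x) n).
    replace (1 - (1 - x)) with x in * by ring. nra. }
  apply (is_series_of_approximants _ (fun k => p k * INR k ^ 3)
           (fun x k => p k * geom_sum2 (1 - x) k)); auto.
  - intros x k Hx. pose proof (geom_sum2_bounds (1 - x) k ltac:(lra)).
    pose proof (pdens_nonneg p Hp k). nra.
  - intros x k Hx. pose proof (geom_sum2_defect (1 - x) k ltac:(lra)).
    pose proof (pdens_nonneg p Hp k). replace (1 - (1 - x)) with x in * by ring. nra.
  - intro k. pose proof (pdens_nonneg p Hp k). pose proof (pow_le _ 3 (pos_INR k)). nra.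
  - intros eps Heps. destruct (Hexp eps Heps) as [eta [Heta H]].
    exists eta. split; auto. intros x Hx Hx1.
    specialize (H x Hx Hx1). destruct (one_sub_gf_shift x ltac:(lra)) as [_ E].
    rewrite HDC in E by lra.
    set (C := Series (fun k => p k * geom_sum2 (1 - x) k)) in *.
    replace (gf p (1 - x) - (1 - m * x + s / 2 * x ^ 2)) with (x ^ 2 * (C - s / 2)) in H
      by lra.
    rewrite Rabs_mult, (Rabs_pos_eq (x ^ 2)) in H by apply pow2_ge_0.
    apply (Rmult_le_reg_l (x ^ 2)); [apply pow_lt; lra|]. lra.
Qed.

End MomentsOfExpansion.

Lemma moments_of_gf_expansion (p : nat -> R) (m s : R) :
  is_pdens p -> gf_expands p m s -> finite_M2 p /\ M1 p = m /\ M2 p = s + m.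
Proof.
  intros Hp Hexp.
  assert (H1 := is_series_M1_of_expansion p m s Hp Hexp).
  assert (H2 := is_series_half_fact2_of_expansion p m s Hp Hexp).
  assert (HM2 : is_series (fun k => INR k ^ 2 * p k) (s + m)).
  { pose proof (is_series_plus _ _ _ _ (is_series_scal_l 2 _ _ H2) H1) as H.
    unfold plus, scal in H; simpl in H; unfold mult in H; simpl in H.
    replace (s + m) with (2 * (s / 2) + m) by field.
    refine (is_series_ext _ _ _ _ H). intro n. simpl. field. }
  split; [eexists; exact HM2|].
  split; apply is_series_unique; auto.
Qed.

Lemma gf_expands_of_bound (p : nat -> R) (m s K : R) : 0 <= K ->
  (forall eps, 0 < eps -> exists Ke, 0 <= Ke /\ forall z, 0 <= z <= 1 ->
     Rabs (gf p z - (1 - m * (1 - z) + s / 2 * (1 - z) ^ 2))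
       <= K * (1 - z) ^ 2 * (eps + Ke * (1 - z))) ->
  gf_expands p m s.
Proof.
  intros HK H eps Heps.
  destruct (H (eps / (2 * (K + 1))) ltac:(apply Rdiv_lt_0_compat; lra)) as [Ke [HKe Hb]].
  set (eta := eps / (2 * (K + 1) * (Ke + 1))).
  assert (Heta : 0 < eta) by (apply Rdiv_lt_0_compat; nra).
  exists eta. split; auto. intros x Hx Hx1.
  specialize (Hb (1 - x) ltac:(lra)). replace (1 - (1 - x)) with x in Hb by ring.
  assert (Hsmall : K * (eps / (2 * (K + 1)) + Ke * x) <= eps).
  { assert (Ke * x <= eps / (2 * (K + 1))).
    { apply Rle_trans with ((Ke + 1) * eta); [nra|].
      unfold eta. right. field. lra. }
    assert (K * (eps / (2 * (K + 1))) <= eps / 2).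
    { replace (eps / 2) with ((K + 1) * (eps / (2 * (K + 1)))) by (field; lra).
      apply Rmult_le_compat_r; [apply Rlt_le, Rdiv_lt_0_compat; lra|lra]. }
    nra. }
  apply Rle_trans with (1 := Hb). pose proof (pow2_ge_0 x). nra.
Qed.

(** * A weighted Gronwall lemma *)

Lemma filterlim_at_right_of_continuous (g : R -> R) t0 :
  filterlim g (locally t0) (locally (g t0)) -> filterlim g (at_right t0) (locally (g t0)).
Proof.
  intros Hc P HP. specialize (Hc P HP). unfold filtermap in *. unfold at_right, within.
  apply (filter_imp (fun x => P (g x))); auto.
Qed.

Lemma filterlim_Rminus {F : (R -> Prop) -> Prop} {FF : Filter F} (g h : R -> R) lg lh :
  filterlim g F (locally lg) -> filterlim h F (locally lh) ->
  filterlim (fun r => g r - h r) F (locally (lg - lh)).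
Proof.
  intros Hg Hh.
  apply (filterlim_comp_2 (H := locally (- lh)) g (fun r => - h r) Rplus Hg).
  - apply filterlim_comp with (1 := Hh), (filterlim_opp lh).
  - exact (filterlim_plus lg (- lh)).
Qed.

Lemma Rabs_sub_le_of_derive_bound (g dg : R -> R) t0 r B : t0 < r ->
  (forall rho, t0 < rho <= r -> is_derive g rho (dg rho)) ->
  (forall rho, t0 < rho <= r -> Rabs (dg rho) <= B) ->
  filterlim g (at_right t0) (locally (g t0)) ->
  Rabs (g r - g t0) <= B * (r - t0).
Proof.
  intros Hr Hd HB Hc.
  assert (Hs : forall s, t0 < s < r -> Rabs (g r - g s) <= B * (r - t0)).
  { intros s Hs.
    destruct (MVT_gen g s r dg) as [c [Hc1 Hc2]];
      rewrite ?Rmin_left, ?Rmax_right in * by lra.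
    - intros x Hx. apply Hd. lra.
    - intros x Hx. apply continuity_pt_filterlim, (ex_derive_continuous g x).
      exists (dg x). apply Hd. lra.
    - rewrite Hc2, Rabs_mult, (Rabs_pos_eq (r - s)) by lra.
      pose proof (HB c ltac:(lra)). pose proof (Rabs_pos (dg c)).
      apply Rle_trans with (B * (r - s)); [apply Rmult_le_compat_r; lra|nra]. }
  destruct (Rle_dec (Rabs (g r - g t0)) (B * (r - t0))) as [|Hn]; auto.
  exfalso. set (e := Rabs (g r - g t0) - B * (r - t0)).
  assert (He : 0 < e) by (unfold e; lra).
  destruct (Hc _ (locally_ball (g t0) (mkposreal e He))) as [d Hdd].
  set (s := t0 + Rmin (d / 2) ((r - t0) / 2)).
  pose proof (cond_pos d). pose proof (Rmin_l (d / 2) ((r - t0) / 2)).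
  pose proof (Rmin_r (d / 2) ((r - t0) / 2)).
  assert (0 < Rmin (d / 2) ((r - t0) / 2)) by (apply Rmin_glb_lt; lra).
  assert (Hs1 : t0 < s < r) by (unfold s; lra).
  assert (Hb : Rabs (g s - g t0) < e).
  { apply (Hdd s); [|exact (proj1 Hs1)].
    change (Rabs (s - t0) < d). unfold s. rewrite Rabs_pos_eq; lra. }
  pose proof (Hs s Hs1). pose proof (Rabs_triang (g r - g s) (g s - g t0)).
  replace (g r - g s + (g s - g t0)) with (g r - g t0) in * by ring.
  unfold e in *. lra.
Qed.

Lemma nonpos_of_le_div_pow2 x y : 0 <= y -> (forall n, x <= y / 2 ^ n) -> x <= 0.
Proof.
  intros Hy H. destruct (Rle_dec x 0) as [|Hn]; auto. exfalso.
  destruct (INR_archimed x y ltac:(lra)) as [n Hn2].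
  assert (Hpow : INR n + 1 <= 2 ^ n).
  { clear. induction n; [simpl; lra|]. rewrite S_INR. simpl. pose proof (pos_INR n). lra. }
  specialize (H n). pose proof (pos_INR n).
  assert (y / 2 ^ n * 2 ^ n = y) by (field; apply pow_nonzero; lra).
  nra.
Qed.

(* Gronwall's lemma for the family [H r] in the weighted sup norm [sup_w |H r w| / W w];
   the Lipschitz hypothesis [Hlip] is only required in that norm. *)
Section WeightedGronwall.

Variables (H dH : R -> R -> R) (W : R -> R) (T L B delta : R).
Hypothesis HL : 0 <= L.
Hypothesis Hdelta : 0 < delta.
Hypothesis HW : forall w, 0 <= w <= 1 -> delta <= W w.
Hypothesis HB : forall r w, 0 <= r <= T -> 0 <= w <= 1 -> Rabs (H r w) <= B.
Hypothesis Hder : forall w, 0 <= w <= 1 -> forall r, 0 < r <= T ->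
  is_derive (fun r => H r w) r (dH r w).
Hypothesis Hrc : forall w, 0 <= w <= 1 ->
  filterlim (fun r => H r w) (at_right 0) (locally (H 0 w)).
Hypothesis Hlip : forall r K, 0 < r <= T -> 0 <= K ->
  (forall w, 0 <= w <= 1 -> Rabs (H r w) <= K * W w) ->
  forall z, 0 <= z <= 1 -> Rabs (dH r z) <= W z * (1 + L * K).

Let bounded_by K t0 t1 := forall r w, t0 <= r <= t1 -> 0 <= w <= 1 -> Rabs (H r w) <= K * W w.

Lemma weighted_bound_improve t0 t1 K0 K : 0 <= t0 <= t1 -> t1 <= T ->
  L * (t1 - t0) <= 1 / 2 -> 0 <= K ->
  (forall w, 0 <= w <= 1 -> Rabs (H t0 w) <= K0 * W w) ->
  bounded_by K t0 t1 -> bounded_by (K0 + (t1 - t0) + K / 2) t0 t1.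
Proof.
  intros Ht Ht1 HLh HK H0 HKb r w Hr Hw.
  pose proof (HW w Hw) as HWw. pose proof (H0 w Hw).
  destruct (Req_dec r t0) as [->|Hrt].
  { assert (0 <= K0) by (pose proof (Rabs_pos (H t0 w)); nra). nra. }
  assert (Hdiff : Rabs (H r w - H t0 w) <= W w * (1 + L * K) * (r - t0)).
  { apply (Rabs_sub_le_of_derive_bound (fun r => H r w) (fun r => dH r w)); [lra| | |].
    - intros rho Hrho. apply Hder; auto. lra.
    - intros rho Hrho. apply Hlip; auto; [lra|].
      intros w' Hw'. apply HKb; auto. lra.
    - destruct (Req_dec t0 0) as [->|Ht0]; [apply Hrc; auto|].
      apply (filterlim_at_right_of_continuous (fun r => H r w)).
      apply (ex_derive_continuous (fun r => H r w)).
      exists (dH t0 w). apply Hder; auto. lra. }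
  assert (W w * (1 + L * K) * (r - t0) <= W w * ((t1 - t0) + K / 2)).
  { rewrite Rmult_assoc. apply Rmult_le_compat_l; [lra|].
    assert (L * K * (r - t0) <= L * K * (t1 - t0)) by (apply Rmult_le_compat_l; nra).
    nra. }
  pose proof (Rabs_triang (H r w - H t0 w) (H t0 w)).
  replace (H r w - H t0 w + H t0 w) with (H r w) in * by ring.
  nra.
Qed.

(* Iterating [weighted_bound_improve] from the crude bound [B / delta] halves the excess
   over [2 (K0 + (t1 - t0))] at each round. *)
Lemma weighted_bound_step t0 t1 K0 : 0 <= t0 <= t1 -> t1 <= T ->
  L * (t1 - t0) <= 1 / 2 -> 0 <= K0 ->
  (forall w, 0 <= w <= 1 -> Rabs (H t0 w) <= K0 * W w) ->
  bounded_by (2 * (K0 + (t1 - t0))) t0 t1.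
Proof.
  intros Ht Ht1 HLh HK0 H0.
  set (c := 2 * (K0 + (t1 - t0))). set (D := B / delta).
  assert (HB0 : 0 <= B) by (pose proof (HB t0 0 ltac:(lra) ltac:(lra));
                           pose proof (Rabs_pos (H t0 0)); lra).
  assert (HD : 0 <= D) by (apply Rdiv_le_0_compat; lra).
  assert (Hn : forall n, bounded_by (c + D / 2 ^ n) t0 t1).
  { induction n; intros r w Hr Hw.
    - simpl. rewrite Rdiv_1_r. pose proof (HB r w ltac:(lra) Hw). pose proof (HW w Hw).
      assert (B <= D * W w).
      { replace B with (D * delta) by (unfold D; field; lra). apply Rmult_le_compat_l; lra. }
      unfold c. nra.
    - assert (HP : 0 < 2 ^ n) by (apply pow_lt; lra).
      assert (HDn : 0 <= D / 2 ^ n) by (apply Rdiv_le_0_compat; lra).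
      replace (c + D / 2 ^ S n) with (K0 + (t1 - t0) + (c + D / 2 ^ n) / 2)
        by (unfold c; simpl; field; lra).
      apply weighted_bound_improve; auto. unfold c. lra. }
  intros r w Hr Hw.
  assert (Rabs (H r w) - c * W w <= 0); [|lra].
  apply (nonpos_of_le_div_pow2 _ (D * W w)); [pose proof (HW w Hw); nra|].
  intro n. specialize (Hn n r w Hr Hw).
  replace (D * W w / 2 ^ n) with (D / 2 ^ n * W w) by (field; apply pow_nonzero; lra). lra.
Qed.

End WeightedGronwall.

Fixpoint gronwall_const (h : R) (j : nat) : R :=
  match j with O => 1 | S j => 2 * (gronwall_const h j + h) end.

Lemma gronwall_const_ge1 h j : 0 <= h -> 1 <= gronwall_const h j.
Proof. intros Hh; induction j; simpl; lra. Qed.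

Lemma exists_fine_mesh T L : 0 < T -> 0 <= L ->
  exists (M : nat) h, 0 < h /\ INR M * h = T /\ L * h <= 1 / 2.
Proof.
  intros HT HL. destruct (INR_unbounded (2 * L * T)) as [N HN].
  assert (HM : 0 < INR (S N)) by (rewrite S_INR; pose proof (pos_INR N); lra).
  exists (S N), (T / INR (S N)). split; [apply Rdiv_lt_0_compat; lra|].
  split; [field; lra|].
  assert (2 * L * T <= INR (S N)) by (rewrite S_INR; lra).
  apply (Rmult_le_reg_l (2 * INR (S N))); [lra|].
  replace (2 * INR (S N) * (L * (T / INR (S N)))) with (2 * L * T) by (field; lra). lra.
Qed.

Lemma weighted_gronwall T L : 0 < T -> 0 <= L -> exists K, 0 <= K /\
  forall (H dH : R -> R -> R) (W : R -> R) (B delta : R),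
  0 < delta ->
  (forall w, 0 <= w <= 1 -> delta <= W w) ->
  (forall r w, 0 <= r <= T -> 0 <= w <= 1 -> Rabs (H r w) <= B) ->
  (forall w, 0 <= w <= 1 -> forall r, 0 < r <= T -> is_derive (fun r => H r w) r (dH r w)) ->
  (forall w, 0 <= w <= 1 -> filterlim (fun r => H r w) (at_right 0) (locally (H 0 w))) ->
  (forall r K, 0 < r <= T -> 0 <= K ->
     (forall w, 0 <= w <= 1 -> Rabs (H r w) <= K * W w) ->
     forall z, 0 <= z <= 1 -> Rabs (dH r z) <= W z * (1 + L * K)) ->
  (forall w, 0 <= w <= 1 -> Rabs (H 0 w) <= W w) ->
  forall r w, 0 <= r <= T -> 0 <= w <= 1 -> Rabs (H r w) <= K * W w.
Proof.
  intros HT HL. destruct (exists_fine_mesh T L HT HL) as [M [h [Hh [HMh HLh]]]].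
  exists (gronwall_const h M). split; [pose proof (gronwall_const_ge1 h M ltac:(lra)); lra|].
  intros H dH W B delta Hd HW HHB Hder Hrc Hlip H0.
  assert (Hj : forall j, (j <= M)%nat -> forall r w, 0 <= r <= INR j * h -> 0 <= w <= 1 ->
     Rabs (H r w) <= gronwall_const h j * W w).
  { induction j; intros Hj r w Hr Hw.
    { simpl in Hr. replace r with 0 by lra. simpl. rewrite Rmult_1_l. auto. }
    assert (HjM : INR (S j) * h <= T).
    { rewrite <- HMh. apply Rmult_le_compat_r; [lra|]. apply le_INR, Hj. }
    rewrite S_INR in Hr, HjM. pose proof (pos_INR j).
    pose proof (gronwall_const_ge1 h j ltac:(lra)).
    destruct (Rle_dec r (INR j * h)) as [Hle|Hgt].
    - apply Rle_trans with (gronwall_const h j * W w); [apply IHj; auto; [lia|lra]|].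
      simpl. apply Rmult_le_compat_r; [pose proof (HW w Hw); lra|lra].
    - simpl gronwall_const.
      replace h with ((INR j + 1) * h - INR j * h) at 2 by ring.
      assert (Hjh : 0 <= INR j * h) by (apply Rmult_le_pos; lra).
      apply (weighted_bound_step H dH W T L B delta); auto; try lra.
      intros w' Hw'. apply IHj; auto; [lia|lra]. }
  intros r w Hr Hw. apply Hj; auto. lra.
Qed.

(** * Algebraic estimates for the Taylor polynomial *)

Lemma phi_derive a b t : is_derive (phi a b) t (b * phi a b t + exp (a * t)).
Proof.
  unfold phi. destruct (Req_EM_T a b) as [->|Hab].
  - auto_derive; auto. ring.
  - auto_derive; auto. field. lra.
Qed.

Lemma phi_0 a b : phi a b 0 = 0.
Proof. unfold phi. destruct (Req_EM_T a b); rewrite !Rmult_0_r, exp_0; field_simplify; lra. Qed.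

Lemma Rabs_mult_le a b A B : Rabs a <= A -> Rabs b <= B -> Rabs (a * b) <= A * B.
Proof. intros Ha Hb. rewrite Rabs_mult. apply Rmult_le_compat; auto using Rabs_pos. Qed.

Lemma Rabs_mult_nonneg_le a b A B : Rabs a <= A -> 0 <= b <= B -> Rabs (a * b) <= A * B.
Proof. intros Ha Hb. apply Rabs_mult_le; auto. rewrite Rabs_pos_eq; lra. Qed.

Lemma Rabs_triang4 a b c d : Rabs (a + b + c - d) <= Rabs a + Rabs b + Rabs c + Rabs d.
Proof.
  pose proof (Rabs_triang (a + b + c) (- d)). pose proof (Rabs_triang (a + b) c).
  pose proof (Rabs_triang a b). rewrite Rabs_Ropp in *. unfold Rminus. lra.
Qed.

(* With [x = 1 - w], [uX = (1 - gf pX w) / x] and [uY] likewise, [taylor_defect] is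
   [(P(gf pX w) P(gf pY w) - P(w) - dP(w)) / x^2] for the Taylor polynomial
   [P(w) = 1 - m x + s/2 x^2] whose coefficients follow the moment equations. *)
Definition taylor_defect_tail (m s mu nu rX rY x : R) : R :=
  let uX := mu - x * rX in let uY := nu - x * rY in
  s / 2 * (rX * (uX + mu) + rY * (uY + nu)) + m ^ 2 * (rX * uY + mu * rY)
  + m * s / 2 * (uX * uY * (uX + uY)) - s ^ 2 / 4 * x * (uX ^ 2 * uY ^ 2).

Definition taylor_defect (m s mu nu sX sY rX rY x : R) : R :=
  m * (rX + rY - (sX + sY) / 2) - x * taylor_defect_tail m s mu nu rX rY x.

Lemma taylor_defect_tail_bound K mu nu sX sY :
  0 <= K -> 0 <= mu -> 0 <= nu -> exists C, forall m s rX rY x,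
  0 <= x <= 1 -> Rabs m <= K -> Rabs s <= K ->
  0 <= rX <= sX / 2 -> 0 <= rY <= sY / 2 -> 0 <= mu - x * rX -> 0 <= nu - x * rY ->
  Rabs (taylor_defect_tail m s mu nu rX rY x) <= C.
Proof.
  intros HK Hmu Hnu.
  exists (K / 2 * (sX * mu + sY * nu) + K ^ 2 * (sX * nu + mu * sY) / 2
          + K ^ 2 / 2 * (mu * nu * (mu + nu)) + K ^ 2 / 4 * (mu ^ 2 * nu ^ 2)).
  intros m s rX rY x Hx Hm Hs HrX HrY HuX HuY.
  unfold taylor_defect_tail. set (uX := mu - x * rX) in *. set (uY := nu - x * rY) in *.
  assert (HuX' : uX <= mu) by (unfold uX; nra). assert (HuY' : uY <= nu) by (unfold uY; nra).
  assert (Hs2 : s ^ 2 <= K ^ 2)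
    by (rewrite <- (pow2_abs s); apply pow_incr; split; [apply Rabs_pos|lra]).
  assert (Hm2 : m ^ 2 <= K ^ 2)
    by (rewrite <- (pow2_abs m); apply pow_incr; split; [apply Rabs_pos|lra]).
  assert (HsK : Rabs (s / 2) <= K / 2)
    by (unfold Rdiv; rewrite Rabs_mult, (Rabs_pos_eq (/ 2)) by lra; lra).
  assert (HmsK : Rabs (m * s / 2) <= K ^ 2 / 2).
  { unfold Rdiv. rewrite !Rabs_mult, (Rabs_pos_eq (/ 2)) by lra.
    pose proof (Rmult_le_compat _ _ _ _ (Rabs_pos m) (Rabs_pos s) Hm Hs). simpl. nra. }
  assert (T1 : Rabs (s / 2 * (rX * (uX + mu) + rY * (uY + nu))) <= K / 2 * (sX * mu + sY * nu)).
  { apply Rabs_mult_nonneg_le; auto. split; [nra|].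
    assert (rX * (uX + mu) <= sX / 2 * (2 * mu)) by (apply Rmult_le_compat; lra).
    assert (rY * (uY + nu) <= sY / 2 * (2 * nu)) by (apply Rmult_le_compat; lra). lra. }
  assert (T2 : Rabs (m ^ 2 * (rX * uY + mu * rY)) <= K ^ 2 * (sX * nu + mu * sY) / 2).
  { unfold Rdiv. rewrite Rmult_assoc. apply Rabs_mult_nonneg_le.
    - rewrite Rabs_pos_eq by apply pow2_ge_0. lra.
    - split; [nra|].
      assert (rX * uY <= sX / 2 * nu) by (apply Rmult_le_compat; lra).
      assert (mu * rY <= mu * (sY / 2)) by (apply Rmult_le_compat_l; lra). lra. }
  assert (T3 : Rabs (m * s / 2 * (uX * uY * (uX + uY))) <= K ^ 2 / 2 * (mu * nu * (mu + nu))).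
  { apply Rabs_mult_nonneg_le; auto. split; [apply Rmult_le_pos; [apply Rmult_le_pos|]; lra|].
    apply Rmult_le_compat; [apply Rmult_le_pos| |apply Rmult_le_compat|]; lra. }
  assert (T4 : Rabs (s ^ 2 / 4 * x * (uX ^ 2 * uY ^ 2)) <= K ^ 2 / 4 * (mu ^ 2 * nu ^ 2)).
  { apply Rabs_mult_nonneg_le.
    - rewrite Rabs_pos_eq by (pose proof (pow2_ge_0 s); apply Rmult_le_pos; lra). nra.
    - split; [apply Rmult_le_pos; apply pow2_ge_0|].
      apply Rmult_le_compat; try apply pow2_ge_0; apply pow_incr; lra. }
  eapply Rle_trans; [apply Rabs_triang4|]. lra.
Qed.

Lemma taylor_defect_bound K mu nu sX sY :
  0 <= K -> 0 <= mu -> 0 <= nu -> exists C, forall m s rX rY x,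
  0 <= x <= 1 -> Rabs m <= K -> Rabs s <= K ->
  0 <= rX <= sX / 2 -> 0 <= rY <= sY / 2 -> 0 <= mu - x * rX -> 0 <= nu - x * rY ->
  Rabs (taylor_defect m s mu nu sX sY rX rY x) <= K * (sX / 2 - rX + (sY / 2 - rY)) + x * C.
Proof.
  intros HK Hmu Hnu. destruct (taylor_defect_tail_bound K mu nu sX sY HK Hmu Hnu) as [C HC].
  exists C. intros m s rX rY x Hx Hm Hs HrX HrY HuX HuY. unfold taylor_defect.
  assert (Rabs (m * (rX + rY - (sX + sY) / 2)) <= K * (sX / 2 - rX + (sY / 2 - rY))).
  { rewrite Rabs_mult, (Rabs_left1 (_ - _)) by lra.
    apply Rmult_le_compat; auto using Rabs_pos; lra. }
  assert (Rabs (x * taylor_defect_tail m s mu nu rX rY x) <= x * C).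
  { rewrite Rabs_mult, Rabs_pos_eq by lra. apply Rmult_le_compat_l; [lra|auto]. }
  pose proof (Rabs_triang (m * (rX + rY - (sX + sY) / 2))
                          (- (x * taylor_defect_tail m s mu nu rX rY x))).
  rewrite Rabs_Ropp in *. unfold Rminus in *. lra.
Qed.

(* The weight of the weighted sup norm, as a function of the distance [x = 1 - w] to [1]. *)
Definition weight (eps K d x : R) : R := x ^ 2 * (eps + K * x) + d.

Lemma weight_ge eps K d x : 0 <= eps -> 0 <= K -> 0 <= x -> d <= weight eps K d x.
Proof.
  intros He HK Hx. unfold weight. assert (Hpos : 0 <= eps + K * x) by nra.
  pose proof (Rmult_le_pos _ _ (pow2_ge_0 x) Hpos). lra.
Qed.

Lemma weight_le_scale eps K d x y c : 0 <= eps -> 0 <= K -> 0 <= d -> 0 <= x ->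
  0 <= y <= c * x -> 0 <= c ->
  weight eps K d y <= (1 + c ^ 2 + c ^ 3) * weight eps K d x.
Proof.
  intros He HK Hd Hx Hy Hc. unfold weight.
  assert (H2 : y ^ 2 <= c ^ 2 * x ^ 2) by (rewrite <- Rpow_mult_distr; apply pow_incr; lra).
  assert (H3 : y ^ 3 <= c ^ 3 * x ^ 3) by (rewrite <- Rpow_mult_distr; apply pow_incr; lra).
  assert (0 <= x ^ 2) by (apply pow_le; lra). assert (0 <= x ^ 3) by (apply pow_le; lra).
  assert (0 <= c ^ 2) by (apply pow_le; lra). assert (0 <= c ^ 3) by (apply pow_le; lra).
  replace (y ^ 2 * (eps + K * y) + d) with (eps * y ^ 2 + K * y ^ 3 + d) by ring.
  assert (eps * y ^ 2 <= c ^ 2 * (eps * x ^ 2)) by nra.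
  assert (K * y ^ 3 <= c ^ 3 * (K * x ^ 3)) by nra.
  assert (0 <= c ^ 2 * (K * x ^ 3)) by (apply Rmult_le_pos; [|apply Rmult_le_pos]; lra).
  assert (0 <= c ^ 3 * (eps * x ^ 2)) by (apply Rmult_le_pos; [|apply Rmult_le_pos]; lra).
  assert (0 <= c ^ 2 * d) by (apply Rmult_le_pos; lra).
  assert (0 <= c ^ 3 * d) by (apply Rmult_le_pos; lra).
  assert (0 <= eps * x ^ 2) by (apply Rmult_le_pos; lra).
  assert (0 <= K * x ^ 3) by (apply Rmult_le_pos; lra).
  nra.
Qed.

(* [(PA + hA) (PB + hB) - (Pz + hz) - dP = E + hA PB + PA hB + hA hB - hz]
   with [E = PA PB - Pz - dP]. *)
Lemma product_perturbation_bound E hA hB hz PA PB Wz Kb KP cW :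
  0 <= Wz -> 0 <= Kb -> 0 <= cW ->
  Rabs E <= Wz -> Rabs hA <= Kb * (cW * Wz) -> Rabs hB <= Kb * (cW * Wz) ->
  Rabs hB <= 1 + KP -> Rabs PA <= KP -> Rabs PB <= KP -> Rabs hz <= Kb * Wz ->
  Rabs (E + hA * PB + PA * hB + hA * hB - hz) <= Wz * (1 + (cW * (3 * KP + 1) + 1) * Kb).
Proof.
  intros HW HK Hc HE HA HB HB' HPA HPB Hz.
  pose proof (Rabs_mult_le _ _ _ _ HA HPB).
  pose proof (Rabs_mult_le _ _ _ _ HPA HB).
  pose proof (Rabs_mult_le _ _ _ _ HA HB').
  pose proof (Rabs_triang (E + hA * PB + PA * hB + hA * hB) (- hz)). rewrite Rabs_Ropp in *.
  pose proof (Rabs_triang (E + hA * PB + PA * hB) (hA * hB)).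
  pose proof (Rabs_triang (E + hA * PB) (PA * hB)).
  pose proof (Rabs_triang E (hA * PB)).
  replace (E + hA * PB + PA * hB + hA * hB + - hz) with (E + hA * PB + PA * hB + hA * hB - hz)
    in * by ring.
  assert (Kb * (cW * Wz) * KP + KP * (Kb * (cW * Wz)) + Kb * (cW * Wz) * (1 + KP) + Kb * Wz + Wz
     = Wz * (1 + (cW * (3 * KP + 1) + 1) * Kb)) by ring.
  lra.
Qed.

(** * Moments of the solution *)

Lemma weight_gf_le eps Ke d p z : 0 <= eps -> 0 <= Ke -> 0 <= d ->
  is_pdens p -> finite_M2 p -> 0 <= z <= 1 ->
  weight eps Ke d (1 - gf p z) <= (1 + M1 p ^ 2 + M1 p ^ 3) * weight eps Ke d (1 - z).
Proof.
  intros Heps HKe Hd Hp Hm Hz. apply weight_le_scale; auto; [lra| |apply M1_nonneg; auto].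
  apply one_sub_gf_bounds; auto.
Qed.

Section KineticMoments.

Variables (pX pY f0 : nat -> R) (f : R -> nat -> R).
Hypotheses (HpX : is_pdens pX) (HpY : is_pdens pY) (HmX : finite_M2 pX) (HmY : finite_M2 pY)
  (Hf0 : is_pdens f0) (Hm0 : finite_M2 f0) (Hk : kinetic_solution pX pY f0 f).

Let mu := M1 pX.
Let nu := M1 pY.
Let sX := M2 pX - M1 pX.
Let sY := M2 pY - M1 pY.
Let a1 := mu + nu - 1.
Let a2 := mu ^ 2 + nu ^ 2 - 1.
Let m0 := M1 f0.

Let mean t := m0 * exp (a1 * t).
Let mom2 t := M2 f0 * exp (a2 * t) + (Varf pX + Varf pY) * m0 * phi a1 a2 t
  + 2 * (mu * nu) * m0 ^ 2 * phi (2 * a1) a2 t.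
Let fact2 t := mom2 t - mean t.

(* The second-order Taylor polynomial at [w = 1] that [gf (f t)] should have, and its time
   derivative computed from the moment equations [mean' = a1 mean] and
   [fact2' = a2 fact2 + (sX + sY) mean + 2 mu nu mean^2]. *)
Let taylor t w := 1 - mean t * (1 - w) + fact2 t / 2 * (1 - w) ^ 2.
Let taylor_dt t w := - (a1 * mean t) * (1 - w)
  + (a2 * fact2 t + mean t * (sX + sY) + 2 * (mu * nu) * mean t ^ 2) / 2 * (1 - w) ^ 2.

Lemma mean_derive t : is_derive mean t (a1 * mean t).
Proof. unfold mean. auto_derive; auto. ring. Qed.

Lemma mom2_derive t :
  is_derive mom2 t (a2 * mom2 t + (Varf pX + Varf pY) * mean t + 2 * (mu * nu) * mean t ^ 2).
Proof.
  assert (Hexp : exp (2 * a1 * t) = exp (a1 * t) ^ 2)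
    by (simpl; rewrite Rmult_1_r, <- exp_plus; f_equal; ring).
  assert (H := is_derive_plus _ _ t _ _
    (is_derive_plus _ _ t _ _
       (is_derive_scal (fun t => exp (a2 * t)) t (M2 f0) (a2 * exp (a2 * t))
          ltac:(auto_derive; auto; ring))
       (is_derive_scal _ t ((Varf pX + Varf pY) * m0) _ (phi_derive a1 a2 t)))
    (is_derive_scal _ t (2 * (mu * nu) * m0 ^ 2) _ (phi_derive (2 * a1) a2 t))).
  unfold plus, scal in H; simpl in H; unfold mult in H; simpl in H.
  unfold mom2, mean. rewrite Hexp in H.
  match type of H with is_derive _ _ ?d => replace (_ + _ + _) with d by ring end.
  exact H.
Qed.

Lemma fact2_derive t :
  is_derive fact2 t (a2 * fact2 t + mean t * (sX + sY) + 2 * (mu * nu) * mean t ^ 2).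
Proof.
  assert (H := is_derive_minus _ _ t _ _ (mom2_derive t) (mean_derive t)).
  unfold minus, plus, opp in H; simpl in H.
  match type of H with is_derive _ _ ?d => replace (_ + _ + _) with d end.
  - exact H.
  - unfold fact2, Varf, sX, sY, a1, a2, mu, nu. ring.
Qed.

Lemma taylor_derive t w : is_derive (fun t => taylor t w) t (taylor_dt t w).
Proof.
  assert (H := is_derive_plus _ _ t _ _
    (is_derive_plus _ _ t _ _
      (is_derive_scal _ t (- (1 - w)) _ (mean_derive t))
      (is_derive_scal _ t ((1 - w) ^ 2 / 2) _ (fact2_derive t)))
    (is_derive_const (1 : R) t)).
  unfold plus, scal, zero in H; simpl in H; unfold mult in H; simpl in H.
  apply (@is_derive_ext R_AbsRing R_NormedModule
           (fun t => - (1 - w) * mean t + (1 - w) ^ 2 / 2 * fact2 t + 1)).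
  { intro s. change (- (1 - w) * mean s + (1 - w) ^ 2 / 2 * fact2 s + 1 = taylor s w :> R).
    unfold taylor. field. }
  match type of H with is_derive _ _ ?d => replace (taylor_dt t w) with d end.
  - exact H.
  - unfold taylor_dt. field.
Qed.

Lemma moment_curves_bounded T : 0 <= T -> exists K, 0 <= K /\
  forall r, 0 <= r <= T -> Rabs (mean r) <= K /\ Rabs (fact2 r) <= K.
Proof.
  intros HT.
  assert (Hc : forall g dg, (forall r, is_derive g r (dg r)) -> forall r, continuity_pt g r).
  { intros g dg Hg r. apply continuity_pt_filterlim, (ex_derive_continuous g r).
    exists (dg r). apply Hg. }
  destruct (continuity_ab_maj (fun r => Rabs (mean r) + Rabs (fact2 r)) 0 T HT) as [r0 [Hr0 _]].
  { intros c _. apply (continuity_pt_plus (comp Rabs mean) (comp Rabs fact2));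
      apply continuity_pt_comp; auto using Rcontinuity_abs.
    - exact (Hc _ _ mean_derive c).
    - exact (Hc _ _ fact2_derive c). }
  exists (Rabs (mean r0) + Rabs (fact2 r0)).
  split; [pose proof (Rabs_pos (mean r0)); pose proof (Rabs_pos (fact2 r0)); lra|].
  intros r Hr. specialize (Hr0 r Hr). simpl in Hr0.
  pose proof (Rabs_pos (mean r)). pose proof (Rabs_pos (fact2 r)). lra.
Qed.

Section Bounded.

Variables (T K : R).
Hypothesis HK0 : 0 <= K.
Hypothesis HK : forall r, 0 <= r <= T -> Rabs (mean r) <= K /\ Rabs (fact2 r) <= K.

Lemma taylor_bounded r w : 0 <= r <= T -> 0 <= w <= 1 -> Rabs (taylor r w) <= 1 + K + K / 2.
Proof.
  intros Hr Hw. destruct (HK r Hr) as [Hm Hs].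
  apply Rabs_le_between in Hm. apply Rabs_le_between in Hs.
  apply Rabs_le. unfold taylor.
  assert (0 <= (1 - w) ^ 2 <= 1) by (split; [apply pow2_ge_0|]; nra).
  split; nra.
Qed.

Lemma remainder_bounded r w : 0 <= r <= T -> 0 <= w <= 1 ->
  Rabs (gf (f r) w - taylor r w) <= 2 + K + K / 2.
Proof.
  intros Hr Hw. destruct Hk as [_ [Hpd _]].
  pose proof (taylor_bounded r w Hr Hw).
  pose proof (gf_unit_interval (f r) (Hpd r (proj1 Hr)) w Hw).
  pose proof (Rabs_triang (gf (f r) w) (- taylor r w)). rewrite Rabs_Ropp in *.
  rewrite (Rabs_pos_eq (gf (f r) w)) in * by lra. unfold Rminus. lra.
Qed.

(* The Taylor polynomial solves the kinetic equation up to [o((1 - w)^2)], uniformly in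
   [r]: the first-order parts cancel by the moment equations, and what is left is controlled
   by the convergence of [gf_rem2 pX] and [gf_rem2 pY] to [sX / 2] and [sY / 2]. *)
Lemma taylor_consistency eps : 0 < eps -> exists Ke, 0 <= Ke /\
  forall r w, 0 <= r <= T -> 0 <= w <= 1 ->
  Rabs (taylor r (gf pX w) * taylor r (gf pY w) - taylor r w - taylor_dt r w)
    <= (1 - w) ^ 2 * (eps + Ke * (1 - w)).
Proof.
  intros Heps.
  destruct (taylor_defect_bound K mu nu sX sY HK0 (M1_nonneg pX HpX HmX)
              (M1_nonneg pY HpY HmY)) as [C HQ].
  set (eps1 := eps / (2 * (K + 1))).
  assert (Heps1 : 0 < eps1) by (apply Rdiv_lt_0_compat; lra).
  destruct (half_fact2_sub_gf_rem2 pX HpX HmX eps1 Heps1) as [KX [HKX HX]].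
  destruct (half_fact2_sub_gf_rem2 pY HpY HmY eps1 Heps1) as [KY [HKY HY]].
  exists (Rabs C + K * (KX + KY)). split; [pose proof (Rabs_pos C); nra|].
  intros r w Hr Hw. destruct (HK r Hr) as [Hm Hs].
  destruct (gf_expansion pX HpX HmX w Hw) as [GX UX].
  destruct (gf_expansion pY HpY HmY w Hw) as [GY UY].
  pose proof (gf_rem2_bounds pX HpX HmX w Hw) as RX.
  pose proof (gf_rem2_bounds pY HpY HmY w Hw) as RY.
  specialize (HX w Hw). specialize (HY w Hw). unfold half_fact2 in *.
  fold sX mu in GX, UX, RX, HX. fold sY nu in GY, UY, RY, HY.
  set (rX := gf_rem2 pX w) in *. set (rY := gf_rem2 pY w) in *.
  replace (taylor r (gf pX w) * taylor r (gf pY w) - taylor r w - taylor_dt r w)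
    with ((1 - w) ^ 2 * taylor_defect (mean r) (fact2 r) mu nu sX sY rX rY (1 - w))
    by (rewrite GX, GY; unfold taylor, taylor_dt, taylor_defect, taylor_defect_tail, a1, a2; field).
  rewrite Rabs_mult, (Rabs_pos_eq ((1 - w) ^ 2)) by apply pow2_ge_0.
  apply Rmult_le_compat_l; [apply pow2_ge_0|].
  eapply Rle_trans; [apply HQ; auto; lra|].
  assert (K * (sX / 2 - rX + (sY / 2 - rY)) <= K * (2 * eps1 + (KX + KY) * (1 - w)))
    by (apply Rmult_le_compat_l; lra).
  assert ((1 - w) * C <= (1 - w) * Rabs C) by (apply Rmult_le_compat_l; [lra|apply Rle_abs]).
  assert (K * (2 * eps1) <= eps).
  { assert ((K + 1) * (2 * eps1) = eps) by (unfold eps1; field; lra). nra. }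
  nra.
Qed.

End Bounded.

Lemma taylor_initial eps : 0 < eps -> exists Ke, 0 <= Ke /\
  forall w, 0 <= w <= 1 -> Rabs (gf f0 w - taylor 0 w) <= (1 - w) ^ 2 * (eps + Ke * (1 - w)).
Proof.
  intros Heps. destruct (half_fact2_sub_gf_rem2 f0 Hf0 Hm0 eps Heps) as [Ke [HKe H0]].
  exists Ke. split; auto. intros w Hw.
  destruct (gf_expansion f0 Hf0 Hm0 w Hw) as [G _].
  pose proof (gf_rem2_bounds f0 Hf0 Hm0 w Hw). specialize (H0 w Hw).
  replace (gf f0 w - taylor 0 w) with ((1 - w) ^ 2 * (gf_rem2 f0 w - half_fact2 f0)).
  - rewrite Rabs_mult, Rabs_pos_eq, Rabs_left1 by (apply pow2_ge_0 || lra).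
    apply Rmult_le_compat_l; [apply pow2_ge_0|lra].
  - rewrite G. unfold taylor, fact2, mom2, mean, half_fact2, m0.
    rewrite !phi_0, !Rmult_0_r, exp_0. field.
Qed.

Lemma gf_solution_initial w : gf (f 0) w = gf f0 w.
Proof.
  destruct Hk as [Hinit _]. unfold gf. apply Series_ext. intro n. rewrite Hinit. reflexivity.
Qed.

Lemma taylor_errors T K eps : 0 <= K ->
  (forall r, 0 <= r <= T -> Rabs (mean r) <= K /\ Rabs (fact2 r) <= K) -> 0 < eps ->
  exists Ke, 0 <= Ke /\
  (forall r w, 0 <= r <= T -> 0 <= w <= 1 ->
     Rabs (taylor r (gf pX w) * taylor r (gf pY w) - taylor r w - taylor_dt r w)
       <= (1 - w) ^ 2 * (eps + Ke * (1 - w))) /\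
  (forall w, 0 <= w <= 1 ->
     Rabs (gf (f 0) w - taylor 0 w) <= (1 - w) ^ 2 * (eps + Ke * (1 - w))).
Proof.
  intros HK0 HK Heps.
  destruct (taylor_consistency T K HK0 HK eps Heps) as [K1 [HK1 Hcons]].
  destruct (taylor_initial eps Heps) as [K2 [HK2 Hinit]].
  assert (Hmono : forall w K', 0 <= w <= 1 -> K' <= Rmax K1 K2 ->
    (1 - w) ^ 2 * (eps + K' * (1 - w)) <= (1 - w) ^ 2 * (eps + Rmax K1 K2 * (1 - w)))
    by (intros w K' Hw HK'; apply Rmult_le_compat_l; [apply pow2_ge_0|nra]).
  exists (Rmax K1 K2). split; [apply Rle_trans with K1; [lra|apply Rmax_l]|split].
  - intros r w Hr Hw. eapply Rle_trans; [apply Hcons; auto|apply Hmono; [auto|apply Rmax_l]].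
  - intros w Hw. rewrite gf_solution_initial.
    eapply Rle_trans; [apply Hinit; auto|apply Hmono; [auto|apply Rmax_r]].
Qed.

Let weight_factor := 1 + mu ^ 2 + mu ^ 3 + nu ^ 2 + nu ^ 3.

Lemma weight_factor_ge1 : 1 <= weight_factor.
Proof.
  pose proof (M1_nonneg pX HpX HmX). pose proof (M1_nonneg pY HpY HmY).
  pose proof (pow_le mu 2 ltac:(assumption)). pose proof (pow_le mu 3 ltac:(assumption)).
  pose proof (pow_le nu 2 ltac:(assumption)). pose proof (pow_le nu 3 ltac:(assumption)).
  unfold weight_factor. lra.
Qed.

Section Remainder.

Variables (T K eps Ke d : R).
Hypotheses (Heps : 0 <= eps) (HKe : 0 <= Ke) (Hd : 0 <= d).
Hypothesis HK : forall r, 0 <= r <= T -> Rabs (mean r) <= K /\ Rabs (fact2 r) <= K.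
Hypothesis Hcons : forall r w, 0 <= r <= T -> 0 <= w <= 1 ->
  Rabs (taylor r (gf pX w) * taylor r (gf pY w) - taylor r w - taylor_dt r w)
    <= (1 - w) ^ 2 * (eps + Ke * (1 - w)).

Let W w := weight eps Ke d (1 - w).

Lemma weight_gf_le_factor z : 0 <= z <= 1 ->
  W (gf pX z) <= weight_factor * W z /\ W (gf pY z) <= weight_factor * W z.
Proof.
  intros Hz.
  assert (HWz : 0 <= W z)
    by (unfold W; pose proof (weight_ge eps Ke d (1 - z) Heps HKe ltac:(lra)); lra).
  pose proof (pow_le mu 2 (M1_nonneg pX HpX HmX)). pose proof (pow_le mu 3 (M1_nonneg pX HpX HmX)).
  pose proof (pow_le nu 2 (M1_nonneg pY HpY HmY)). pose proof (pow_le nu 3 (M1_nonneg pY HpY HmY)).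
  split; (eapply Rle_trans; [apply (weight_gf_le eps Ke d); auto|]);
    apply Rmult_le_compat_r; auto; fold mu nu; unfold weight_factor; lra.
Qed.

(* The remainder [gf (f r) - taylor r] satisfies a linear differential inequality in the
   weighted norm: [gf pX] and [gf pY] move [1 - w] by at most the factors [mu] and [nu]. *)
Lemma remainder_lipschitz r Kb : 0 < r <= T -> 0 <= Kb ->
  (forall w, 0 <= w <= 1 -> Rabs (gf (f r) w - taylor r w) <= Kb * W w) ->
  forall z, 0 <= z <= 1 ->
  Rabs (gf (f r) (gf pX z) * gf (f r) (gf pY z) - gf (f r) z - taylor_dt r z)
    <= W z * (1 + (weight_factor * (3 * (1 + K + K / 2) + 1) + 1) * Kb).
Proof.
  intros Hr HKb Hrem z Hz.
  set (A := gf pX z). set (B := gf pY z).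
  assert (HA : 0 <= A <= 1) by (apply gf_unit_interval; auto).
  assert (HB : 0 <= B <= 1) by (apply gf_unit_interval; auto).
  assert (HWz : 0 <= W z)
    by (unfold W; pose proof (weight_ge eps Ke d (1 - z) Heps HKe ltac:(lra)); lra).
  destruct (weight_gf_le_factor z Hz) as [WA WB]. pose proof weight_factor_ge1.
  assert (Hrr : 0 <= r <= T) by lra.
  replace (gf (f r) A * gf (f r) B - gf (f r) z - taylor_dt r z) with
    ((taylor r A * taylor r B - taylor r z - taylor_dt r z)
     + (gf (f r) A - taylor r A) * taylor r B + taylor r A * (gf (f r) B - taylor r B)
     + (gf (f r) A - taylor r A) * (gf (f r) B - taylor r B) - (gf (f r) z - taylor r z))
    by ring.
  apply product_perturbation_bound.
  - exact HWz.
  - exact HKb.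
  - lra.
  - apply Rle_trans with (1 := Hcons r z Hrr Hz). unfold W, weight. lra.
  - apply Rle_trans with (Kb * W A); [apply Hrem; auto|apply Rmult_le_compat_l; auto].
  - apply Rle_trans with (Kb * W B); [apply Hrem; auto|apply Rmult_le_compat_l; auto].
  - replace (1 + (1 + K + K / 2)) with (2 + K + K / 2) by ring.
    apply (remainder_bounded T); auto.
  - apply (taylor_bounded T); auto.
  - apply (taylor_bounded T); auto.
  - apply Hrem; auto.
Qed.

End Remainder.

Lemma remainder_derive w r : 0 <= w <= 1 -> 0 < r ->
  is_derive (fun r => gf (f r) w - taylor r w) r
    (gf (f r) (gf pX w) * gf (f r) (gf pY w) - gf (f r) w - taylor_dt r w).
Proof.
  intros Hw Hr. destruct Hk as [_ [_ Hgf]].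
  apply (is_derive_minus (fun r => gf (f r) w) (fun r => taylor r w)).
  - apply Hgf; auto.
  - apply taylor_derive.
Qed.

Lemma remainder_right_continuous w : 0 <= w <= 1 ->
  filterlim (fun r => gf (f r) w - taylor r w) (at_right 0) (locally (gf (f 0) w - taylor 0 w)).
Proof.
  intros Hw. destruct Hk as [_ [_ Hgf]]. rewrite gf_solution_initial.
  apply filterlim_Rminus; [apply Hgf; auto|].
  apply (filterlim_at_right_of_continuous (fun r => taylor r w)).
  apply (ex_derive_continuous (fun r => taylor r w)).
  eexists. apply taylor_derive.
Qed.

(* Gronwall in the norm weighted by [weight eps Ke d] bounds [gf (f T) - taylor T] by
   [Kfin * weight eps Ke d] with [Kfin] independent of [eps] and [d]; the offset [d > 0] only
   keeps the weight away from [0], as [weighted_gronwall] requires, and is then sent to [0]. *)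
Lemma moments_of_solution T : 0 < T ->
  finite_M2 (f T) /\ M1 (f T) = mean T /\ M2 (f T) = fact2 T + mean T.
Proof.
  intros HT. destruct Hk as [_ [Hpd _]].
  destruct (moment_curves_bounded T) as [K [HK0 HK]]; [lra|].
  set (L := weight_factor * (3 * (1 + K + K / 2) + 1) + 1).
  assert (HL : 0 <= L) by (pose proof weight_factor_ge1; unfold L; nra).
  destruct (weighted_gronwall T L HT HL) as [Kfin [HKfin HG]].
  apply moments_of_gf_expansion; [apply Hpd; lra|].
  apply (gf_expands_of_bound _ _ _ Kfin HKfin). intros eps Heps.
  destruct (taylor_errors T K eps HK0 HK Heps) as [Ke [HKe [Hcons Hinit]]].
  exists Ke. split; [exact HKe|]. intros z Hz.
  apply (le_of_le_plus_small _ _ Kfin 1 HKfin); [lra|]. intros d Hd.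
  assert (HWd : forall w, 0 <= w <= 1 -> d <= weight eps Ke d (1 - w))
    by (intros w Hw; apply weight_ge; lra).
  apply Rle_trans with (Kfin * weight eps Ke d (1 - z)); [|unfold weight; lra].
  apply (HG (fun r w => gf (f r) w - taylor r w)
    (fun r w => gf (f r) (gf pX w) * gf (f r) (gf pY w) - gf (f r) w - taylor_dt r w)
    (fun w => weight eps Ke d (1 - w)) (2 + K + K / 2) d (proj1 Hd) HWd); auto.
  - intros r w Hr Hw. apply (remainder_bounded T); auto.
  - intros w Hw r Hr. apply remainder_derive; auto. lra.
  - exact remainder_right_continuous.
  - intros r Kb Hr HKb Hb. apply (remainder_lipschitz T K eps Ke d); auto; lra.
  - intros w Hw. apply Rle_trans with (1 := Hinit w Hw). unfold weight. lra.
  - lra.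
Qed.

End KineticMoments.

Theorem proposition3p6 (pX pY f0 : nat -> R) (f : R -> nat -> R) :
  is_pdens pX -> is_pdens pY ->
  pX 0%nat <> 1 -> pY 0%nat <> 1 ->
  finite_M2 pX -> finite_M2 pY ->
  is_pdens f0 -> finite_M2 f0 ->
  kinetic_solution pX pY f0 f ->
  let m0 := M1 f0 in
  let alpha1 := M1 pX + M1 pY - 1 in
  let alpha2 := (M1 pX) ^ 2 + (M1 pY) ^ 2 - 1 in
  let beta := Varf pX + Varf pY in
  let gamma := M1 pX * M1 pY in
  forall t, 0 < t ->
    finite_M2 (f t) /\
    Varf (f t) =
      M2 f0 * exp (alpha2 * t) - m0 ^ 2 * exp (2 * alpha1 * t)
      + beta * m0 * phi alpha1 alpha2 t
      + 2 * gamma * m0 ^ 2 * phi (2 * alpha1) alpha2 t.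
Proof.
  intros HpX HpY _ _ HmX HmY Hf0 Hm0 Hk m0 alpha1 alpha2 beta gamma t Ht.
  destruct (moments_of_solution pX pY f0 f HpX HpY HmX HmY Hf0 Hm0 Hk t Ht)
    as [Hfin [HM1 HM2]].
  split; [exact Hfin|].
  unfold Varf at 1. rewrite HM2, HM1.
  replace (exp (2 * alpha1 * t)) with (exp (alpha1 * t) ^ 2)
    by (simpl; rewrite Rmult_1_r, <- exp_plus; f_equal; ring).
  unfold m0, alpha1, alpha2, beta, gamma. ring.
Qed.
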